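(* Let $\Sigma$ be a set of identities (equalities between terms) of a fixed finite algebraic type such that the variety of all algebras of that type satisfying $\Sigma$ is locally finite. Then the pseudovariety $\mathsf V$ of all finite algebras satisfying $\Sigma$ is strong.
   Context: A pseudovariety is a nonempty class of finite algebras of a fixed finite type closed under homomorphic images, subalgebras and finite direct products. A variety is locally finite if its finitely generated algebras are finite. For a pseudovariety $\mathsf U$ and finite set $A$, $\Omega_A\mathsf U$ is the free pro-$\mathsf U$ algebra on $A$ (inverse limit of the $A$-generated members of $\mathsf U$; every map from $A$ into a pro-$\mathsf U$ algebra extends uniquely to a continuous homomorphism). A $\mathsf U$-pseudoidentity is $u=v$ with $u,v\in\Omega_B\mathsf U$, $B$ finite; it holds in $T\in\mathsf U$ if both sides agree under every continuous homomorphism $\Omega_B\mathsf U\to T$. For a set $\Gamma$ of $\mathsf U$-pseudoidentities, $[\![\Gamma]\!]_{\mathsf U}$ denotes the members of $\mathsf U$ satisfying $\Gamma$. Provability: for finite $A$ define $\Gamma_\alpha\subseteq\Omega_A\mathsf U\times\Omega_A\mathsf U$: $\Gamma_0$ is the set of pairs $(\mathbf t(\varphi(u),w_1,\dots,w_n),\mathbf t(\varphi(v),w_1,\dots,w_n))$ with $u=v$ or $v=u$ in $\Gamma$, $u,v\in\Omega_B\mathsf U$, $\varphi:\Omega_B\mathsf U\to\Omega_A\mathsf U$ a continuous homomorphism, $\mathbf t$ a term, $w_i\in\Omega_A\mathsf U$; $\Gamma_{2\alpha+1}$ is the transitive closure of $\Gamma_{2\alpha}$; $\Gamma_{2\alpha+2}$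 the topological closure of $\Gamma_{2\alpha+1}$; unions at limit ordinals. $u=v$ is provable from $\Gamma$ if $(u,v)\in\bigcup_\alpha\Gamma_\alpha$. The pseudovariety $\mathsf U$ is strong if for every set $\Gamma$ of $\mathsf U$-pseudoidentities, every $\mathsf U$-pseudoidentity valid in $[\![\Gamma]\!]_{\mathsf U}$ is provable from $\Gamma$. *)

From HB Require Import structures.
From Stdlib Require Import FunctionalExtensionality List.
From mathcomp Require Import all_boot.


Set Implicit Arguments.
Unset Strict Implicit.
Unset Printing Implicit Defensive.

Record signature := Signature { op : finType; arity : op -> nat }.

Section UA.
Variable L : signature.

Record algebra := Algebra {
  carrier :> Type;
  interp : forall o : op L, ('I_(arity o) -> carrier) -> carrier }.
Arguments interp : clear implicits.

Record finalgebra := FinAlgebra {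
  fcarrier :> finType;
  finterp : forall o : op L, ('I_(arity o) -> fcarrier) -> fcarrier }.

Definition alg_of_fin (T : finalgebra) : algebra := @Algebra (fcarrier T) (@finterp T).
Coercion alg_of_fin : finalgebra >-> algebra.

Inductive term (X : Type) : Type :=
| Var : X -> term X
| App : forall o : op L, ('I_(arity o) -> term X) -> term X.

Fixpoint eval (X : Type) (A : algebra) (e : X -> A) (t : term X) : A :=
  match t with
  | Var x => e x
  | App o f => interp A o (fun i => eval e (f i))
  end.

Definition is_hom (A B : algebra) (h : A -> B) : Prop :=
  forall (o : op L) (args : 'I_(arity o) -> A),
    h (interp A o args) = interp B o (fun i => h (args i)).

Definition identity := (term nat * term nat)%type.

Definition satisfies (A : algebra) (Sigma : identity -> Prop) : Prop :=
  forall p, Sigma p -> forall e : nat -> A, eval e p.1 = eval e p.2.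

Definition locally_finite (Sigma : identity -> Prop) : Prop :=
  forall A : algebra, satisfies A Sigma ->
  forall (k : nat) (g : 'I_k -> A),
    (forall a : A, exists t : term 'I_k, eval g t = a) ->
    exists l : list A, forall a : A, List.In a l.

Section Pseudo.
Variable Sigma : identity -> Prop.

Definition inV (T : finalgebra) : Prop := satisfies T Sigma.

Section Omega.
Variable A : finType.

(* Indices of the inverse system: A-generated members of V, represented
   (up to isomorphism) on carriers 'I_n. *)
Record vindex := VIndex {
  vn : nat;
  vint : forall o : op L, ('I_(arity o) -> 'I_vn) -> 'I_vn;
  vsat : satisfies (@Algebra 'I_vn vint) Sigma;
  vgen : A -> 'I_vn;
  vgenP : forall x : 'I_vn, exists t : term A, eval (A := @Algebra 'I_vn vint) vgen t = x }.

Arguments vint : clear implicits.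
Arguments vgen : clear implicits.
Definition valg (j : vindex) : algebra := @Algebra 'I_(vn j) (@vint j).

(* Omega_A V: the inverse limit (compatible families) *)
Record omega := Omega {
  ocomp : forall j : vindex, 'I_(vn j);
  ocompat : forall (j k : vindex) (h : 'I_(vn j) -> 'I_(vn k)),
     is_hom (A := valg j) (B := valg k) h ->
     (forall a, h (vgen j a) = vgen k a) -> h (ocomp j) = ocomp k }.

Arguments ocomp : clear implicits.
Lemma omega_op_compat (o : op L) (args : 'I_(arity o) -> omega) :
  forall (j k : vindex) (h : 'I_(vn j) -> 'I_(vn k)),
     is_hom (A := valg j) (B := valg k) h ->
     (forall a, h (vgen j a) = vgen k a) ->
     h (vint j o (fun i => ocomp (args i) j)) = vint k o (fun i => ocomp (args i) k).
Proof.
move=> j k h hh hg; rewrite (hh o (fun i => ocomp (args i) j)) /=.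
congr (vint k o); apply: functional_extensionality => i.
exact: ocompat.
Qed.

Definition omega_op (o : op L) (args : 'I_(arity o) -> omega) : omega :=
  @Omega (fun j => vint j o (fun i => ocomp (args i) j)) (@omega_op_compat o args).

Definition Omega_alg : algebra := @Algebra omega omega_op.

(* product topology (discrete finite factors): agreement on finitely many indices *)
Definition agree (F : list vindex) (x y : omega) : Prop :=
  forall j, List.In j F -> ocomp x j = ocomp y j.

Definition in_closure (R : omega -> omega -> Prop) (u v : omega) : Prop :=
  forall F : list vindex, exists u' v', R u' v' /\ agree F u u' /\ agree F v v'.

Definition continuous_to (T : Type) (f : omega -> T) : Prop :=
  forall x : omega, exists F : list vindex, forall y, agree F x y -> f y = f x.

End Omega.

Arguments Omega_alg : clear implicits.

Definition continuous_om (B A : finType) (f : omega B -> omega A) : Prop :=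
  forall (x : omega B) (j : vindex A), exists F : list (vindex B),
    forall y, agree F x y -> ocomp (f y) j = ocomp (f x) j.

Definition cont_hom (B A : finType) (f : omega B -> omega A) : Prop :=
  is_hom (A := Omega_alg B) (B := Omega_alg A) f /\ continuous_om f.

Definition holds_in (T : finalgebra) (B : finType) (u v : omega B) : Prop :=
  forall f : omega B -> T,
    is_hom (A := Omega_alg B) (B := T) f -> continuous_to f -> f u = f v.

Definition pseudo_set := forall B : finType, omega B -> omega B -> Prop.

Definition models (Gamma : pseudo_set) (T : finalgebra) : Prop :=
  inV T /\ forall B (u v : omega B), Gamma B u v -> holds_in T u v.

Section Provability.
Variables (Gamma : pseudo_set) (A : finType).

Definition gamma0 (x y : omega A) : Prop :=
  exists (B : finType) (u v : omega B), (@Gamma B u v \/ @Gamma B v u) /\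
  exists phi : omega B -> omega A, cont_hom phi /\
  exists (n : nat) (t : term (option 'I_n)) (w : 'I_n -> omega A),
    x = eval (A := Omega_alg A) (fun z => match z with None => phi u | Some i => w i end) t /\
    y = eval (A := Omega_alg A) (fun z => match z with None => phi v | Some i => w i end) t.

(* union of the transfinite sequence Gamma_alpha = least relation containing
   Gamma_0 (and the diagonal) closed under transitivity and
   topological closure *)
Inductive provable : omega A -> omega A -> Prop :=
| pv_refl x : provable x x
| pv_base x y : gamma0 x y -> provable x y
| pv_trans x y z : provable x y -> provable y z -> provable x z
| pv_clos u v :
    (forall F : list (vindex A), exists u' v',
        provable u' v' /\ agree F u u' /\ agree F v v') -> provable u v.

End Provability.

Definition strong : Prop :=
  forall (Gamma : pseudo_set) (A : finType) (u v : omega A),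
    (forall T : finalgebra, models Gamma T -> holds_in T u v) ->
    provable Gamma u v.

End Pseudo.
End UA.

(* Under local finiteness the subalgebra of Omega_A V generated by A is finite, so it is one
   of the indices of the inverse system, and compatibility forces Omega_A V to be isomorphic to
   it: Omega_A V is finite, generated by A, relatively free, and discrete (one projection is
   injective).  In a discrete Omega_A V the closure steps of provability are trivial and Gamma_0
   is stable under unary polynomials, so provability is a congruence and the quotient Q of
   Omega_A V by it is a finite algebra in V.  Every homomorphism Omega_B V -> Q factors as
   q \o phi through a continuous homomorphism phi, so each pseudoidentity of Gamma holds in Q by
   a Gamma_0 step.  Hence a pseudoidentity u = v valid in [[Gamma]] holds in Q, i.e. q u = q v,
   which says that u = v is provable. *)

From mathcomp Require Import all_boot boolp.

Set Implicit Arguments.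
Unset Strict Implicit.
Unset Printing Implicit Defensive.

Lemma InP (T : eqType) (x : T) (s : seq T) : reflect (List.In x s) (x \in s).
Proof.
elim: s => [|y s IHs] /=; first by constructor.
rewrite in_cons; apply: (iffP orP) => [[/eqP->|/IHs]|[->|/IHs]]; by [left|right].
Qed.

Lemma sval_inj (T : Type) (P : T -> Prop) : injective (@sval T P).
Proof. by case=> x p [y q] /= xy; subst y; rewrite (Prop_irrelevance p q). Qed.

Lemma ord_bij_of_enum (S : Type) :
  (exists s : seq S, forall x, List.In x s) ->
  exists n (enc : S -> 'I_n) (dec : 'I_n -> S), cancel enc dec /\ cancel dec enc.
Proof.
case=> s0 s0P; pose s := undup (s0 : seq {classic S}).
have encP (x : S) : index (x : {classic S}) s < size s.
  by rewrite index_mem mem_undup; apply/InP.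
exists (size s), (fun x => Ordinal (encP x)), (tnth (in_tuple s)); split.
- move=> x; rewrite (tnth_nth x) /=.
  by apply: (@nth_index {classic S}); rewrite -index_mem.
- move=> i; apply: val_inj => /=.
  by rewrite (tnth_nth (tnth (in_tuple s) i)) index_uniq ?undup_uniq.
Qed.

Lemma enum_of_inj (S : Type) (K : finType) (f : S -> K) :
  injective f -> exists s : seq S, forall x, List.In x s.
Proof.
move=> f_inj.
pose g (k : K) : option {classic S} :=
  if pselect (exists x, f x = k) is left ex then Some (sval (cid ex)) else None.
have gK x : g (f x) = Some x.
  rewrite /g; case: pselect => [ex|[]]; last by exists x.
  by congr Some; apply: f_inj; exact: svalP (cid ex).
exists (pmap g (enum K)) => x; apply/(InP (x : {classic S})).
by rewrite mem_pmap -gK map_f ?mem_enum.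
Qed.

Section UniversalAlgebra.
Variable L : signature.

Fixpoint subst X Y (s : X -> term L Y) (t : term L X) : term L Y :=
  match t with Var x => s x | App o f => App (fun i => subst s (f i)) end.

Lemma eval_subst X Y (A : algebra L) (e : Y -> A) (s : X -> term L Y) t :
  eval e (subst s t) = eval (fun x => eval e (s x)) t.
Proof. by elim: t => [x|o f IH] //=; congr interp; apply: funext. Qed.

Lemma eval_hom (A B : algebra L) (h : A -> B) : is_hom h ->
  forall X (e : X -> A) t, h (eval e t) = eval (fun x => h (e x)) t.
Proof.
move=> h_hom X e; elim=> [x|o f IH] //=.
by rewrite h_hom; congr interp; apply: funext.
Qed.

Lemma is_hom_comp (A B C : algebra L) (f : A -> B) (g : B -> C) :
  is_hom f -> is_hom g -> is_hom (g \o f).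
Proof. by move=> f_hom g_hom o args /=; rewrite f_hom g_hom. Qed.

Lemma eq_hom_on_gens X (A B : algebra L) (g : X -> A) (h1 h2 : A -> B) :
  (forall a, exists t, eval g t = a) -> is_hom h1 -> is_hom h2 ->
  (forall x, h1 (g x) = h2 (g x)) -> h1 =1 h2.
Proof.
move=> g_gen h1_hom h2_hom h12 a; have [t <-] := g_gen a.
by rewrite (eval_hom h1_hom) (eval_hom h2_hom); congr eval; apply: funext.
Qed.

Lemma satisfies_inj_hom (A B : algebra L) (h : A -> B) Sigma :
  is_hom h -> injective h -> satisfies B Sigma -> satisfies A Sigma.
Proof.
by move=> h_hom h_inj sB p Sp e; apply: h_inj; rewrite !(eval_hom h_hom); apply: sB.
Qed.

Lemma satisfies_hom_image (A B : algebra L) (h : A -> B) Sigma :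
  is_hom h -> (forall b, exists a, h a = b) -> satisfies A Sigma -> satisfies B Sigma.
Proof.
move=> h_hom h_surj sA p Sp e.
pose r b := sval (cid (h_surj b)).
have -> : e = fun x => h (r (e x)).
  by apply: funext => x; rewrite /r; case: cid.
by rewrite -!(eval_hom h_hom); congr h; apply: sA.
Qed.

Section Generated.
Variables (A : algebra L) (X : Type) (g : X -> A).

Definition gen_carrier := {a : A | exists t, eval g t = a}.

Lemma gen_interp_subproof o (args : 'I_(arity o) -> gen_carrier) :
  exists t, eval g t = interp (fun i => sval (args i)).
Proof.
exists (App (fun i => sval (cid (svalP (args i))))) => /=.
by congr interp; apply: funext => i; case: cid.
Qed.

Definition gen_alg : algebra L :=
  Algebra (fun o args => exist _ _ (@gen_interp_subproof o args)).

Definition gen_of (x : X) : gen_alg := exist _ (g x) (ex_intro _ (Var L x) erefl).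

Lemma sval_gen_hom : is_hom (A := gen_alg) sval.
Proof. by []. Qed.

Lemma sval_gen_eval t : sval (eval gen_of t) = eval g t.
Proof. by rewrite (eval_hom sval_gen_hom). Qed.

Lemma gen_alg_generated (a : gen_alg) : exists t, eval gen_of t = a.
Proof. by case: a => a [t ta]; exists t; apply: sval_inj; rewrite sval_gen_eval. Qed.

End Generated.

(* [eval (env x w) t] is the unary polynomial of [gamma0]: [None] is the hole, [Some i] the
   parameter [w i]. *)
Definition env (S : Type) n (x : S) (w : 'I_n -> S) (z : option 'I_n) : S :=
  if z is Some i then w i else x.

Definition cat_params (S : Type) n m (w0 : 'I_n -> S) (w : 'I_m -> S) (i : 'I_(n + m)) :
    S :=
  match split i with inl a => w0 a | inr b => w b end.

Definition plug n m (t0 : term L (option 'I_n)) (z : option 'I_m) :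
    term L (option 'I_(n + m)) :=
  if z is Some b then Var L (Some (rshift n b))
  else subst (fun z0 => Var L (omap (lshift m) z0)) t0.

Lemma eval_env_plug (A : algebra L) n m (x : A) (w0 : 'I_n -> A) (w : 'I_m -> A) t0 t :
  eval (env (eval (env x w0) t0) w) t =
  eval (env x (cat_params w0 w)) (subst (plug t0) t).
Proof.
rewrite eval_subst; congr eval; apply: funext => -[b|] /=.
  by rewrite /cat_params (unsplitK (inr b)).
rewrite eval_subst; congr eval; apply: funext => -[a|] //=.
by rewrite /cat_params (unsplitK (inl a)).
Qed.

Lemma compatible_of_translations (S : Type) n (F : ('I_n -> S) -> S)
    (R : S -> S -> Prop) :
  (forall x, R x x) -> (forall x y z, R x y -> R y z -> R x z) ->
  (forall i xs x y, R x y ->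
     R (F (fun j => if j == i then x else xs j)) (F (fun j => if j == i then y else xs j))) ->
  forall xs ys, (forall i, R (xs i) (ys i)) -> R (F xs) (F ys).
Proof.
move=> R_refl R_trans R_transl xs ys Rxy.
pose mix k (j : 'I_n) := if j < k then ys j else xs j.
suff mixR k : R (F xs) (F (mix k)).
  by have := mixR n; congr (R _ (F _)); apply: funext => j; rewrite /mix ltn_ord.
elim: k => [|k IHk].
  by have := R_refl (F xs); congr (R _ (F _)); apply: funext => j; rewrite /mix ltn0.
apply: R_trans IHk _; case: (ltnP k n) => [kn|nk].
  have := R_transl (Ordinal kn) (mix k) _ _ (Rxy (Ordinal kn)).
  congr (R (F _) (F _)); apply: funext => j; rewrite /mix; case: eqP => [->|jk] /=.
  - by rewrite ltnn.
  - by [].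
  - by rewrite ltnS leqnn.
  - have /negbTE jk' : nat_of_ord j != k by apply/eqP => jk'; apply: jk; apply: val_inj.
    by rewrite [j < k.+1]ltnS (leq_eqVlt j) jk'.
have -> : mix k.+1 = mix k.
  apply: funext => j; have jk : j < k := leq_trans (ltn_ord j) nk.
  by rewrite /mix [j < k.+1]ltnS jk (ltnW jk).
exact: R_refl.
Qed.

Lemma quotient_finalgebra (A : algebra L) (K : finType) (c : A -> K)
    (theta : A -> A -> Prop) :
  injective c -> (forall x, theta x x) -> (forall x y, theta x y -> theta y x) ->
  (forall x y z, theta x y -> theta y z -> theta x z) ->
  (forall o (xs ys : 'I_(arity o) -> A),
     (forall i, theta (xs i) (ys i)) -> theta (interp xs) (interp ys)) ->
  exists (Q : finalgebra L) (q : A -> Q),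
    [/\ is_hom q, forall b, exists a, q a = b & forall x y, q x = q y <-> theta x y].
Proof.
move=> c_inj th_refl th_sym th_trans th_cong.
pose cls x : {set K} := [set k | `[< exists y, c y = k /\ theta x y >]].
have clsE x y : cls x = cls y <-> theta x y.
  split=> [exy|txy].
    have : c y \in cls x by rewrite exy inE; apply/asboolP; exists y.
    by rewrite inE => /asboolP[z [/c_inj-> ?]].
  apply/setP => k; rewrite !inE; apply/asboolP/asboolP => -[z [<- tz]]; exists z.
    by split=> //; apply: th_trans (th_sym _ _ txy) tz.
  by split=> //; apply: th_trans txy tz.
pose Q := {X : {set K} | `[< exists x, cls x = X >]}.
pose q x : Q := exist _ (cls x) (asboolT (ex_intro _ x erefl)).
have qE x y : q x = q y <-> theta x y.
  by rewrite -clsE; split=> [/(congr1 val)|exy] //; apply: val_inj.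
pose rep (X : Q) : A := sval (cid (asboolW (valP X))).
have repK X : q (rep X) = X by apply: val_inj; rewrite /rep /=; case: cid.
pose QA := FinAlgebra (fun o (args : 'I_(arity o) -> Q) => q (interp (rep \o args))).
exists QA, q; split=> [o xs|X|//]; last by exists (rep X).
by apply/qE; apply: th_cong => i; apply: th_sym; apply/qE; rewrite repK.
Qed.

Section Pseudovariety.
Variable Sigma : identity L -> Prop.

Local Notation oeval A := (@eval L _ (Omega_alg Sigma A)).

Lemma vindex_of_generated (A : finType) (S : algebra L) (g : A -> S) :
  satisfies S Sigma -> (forall s, exists t, eval g t = s) ->
  (exists l : seq S, forall s, List.In s l) ->
  exists (j : vindex Sigma A) (dec : valg j -> S),
    [/\ is_hom dec, injective dec & forall a, dec (vgen j a) = g a].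
Proof.
move=> sS g_gen /ord_bij_of_enum[n [enc [dec [encK decK]]]].
pose vint o (args : 'I_(arity o) -> 'I_n) := enc (interp (dec \o args)).
have dec_hom : is_hom (A := Algebra vint) dec by move=> o args /=; rewrite encK.
have dec_inj := can_inj decK.
have vsat := satisfies_inj_hom dec_hom dec_inj sS.
have vgenP (x : 'I_n) : exists t, eval (A := Algebra vint) (enc \o g) t = x.
  have [t tx] := g_gen (dec x); exists t; apply: dec_inj.
  by rewrite (eval_hom dec_hom) -tx; congr eval; apply: funext => a /=; rewrite encK.
exists (@VIndex L Sigma A n vint vsat (enc \o g) vgenP), dec.
by split=> // a /=; rewrite encK.
Qed.

Definition gens {A : finType} (a : A) : omega Sigma A :=
  @Omega L Sigma A (fun j => vgen j a) (fun j k h _ hg => hg a).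

Lemma omega_ext (A : finType) (x y : omega Sigma A) :
  (forall j, ocomp x j = ocomp y j) -> x = y.
Proof.
case: x y => [cx px] [cy py] /= cxy.
have E := functional_extensionality_dep cxy; subst cy.
by rewrite (Prop_irrelevance px py).
Qed.

Lemma ocomp_eval (A : finType) X (e : X -> omega Sigma A) t j :
  ocomp (oeval A e t) j = eval (A := valg j) (fun x => ocomp (e x) j) t.
Proof. by elim: t => [x|o f IH] //=; congr vint; apply: funext. Qed.

Lemma Omega_sat (A : finType) : satisfies (Omega_alg Sigma A) Sigma.
Proof. by move=> p Sp e; apply: omega_ext => j; rewrite !ocomp_eval; apply: vsat. Qed.

Lemma agree1 (A : finType) (j : vindex Sigma A) x y :
  agree [:: j] x y -> ocomp x j = ocomp y j.
Proof. by apply; left. Qed.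

Lemma eval_gens_eq (B : finType) (T : algebra L) (K : finType) (c : T -> K) t1 t2 :
  satisfies T Sigma -> injective c ->
  oeval B gens t1 = oeval B gens t2 ->
  forall e : B -> T, eval e t1 = eval e t2.
Proof.
move=> sT c_inj t12 e.
have sG : satisfies (gen_alg e) Sigma :=
  satisfies_inj_hom (@sval_gen_hom _ _ e) (@sval_inj _ _) sT.
have finG : exists s : seq (gen_alg e), forall x, List.In x s.
  by apply: (@enum_of_inj _ _ (c \o sval)) => x y /c_inj/sval_inj.
have [k [dec [dec_hom dec_inj dec_gen]]] :=
  vindex_of_generated sG (@gen_alg_generated _ _ e) finG.
have := congr1 (fun x => dec (ocomp x k)) t12.
have gE : (fun b => dec (ocomp (gens b) k)) = gen_of e := funext dec_gen.
by rewrite !ocomp_eval !(eval_hom dec_hom) -!(@sval_gen_eval _ _ e) -gE => ->.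
Qed.

Lemma eval_gens_eq_omega (B A : finType) (y : B -> omega Sigma A) t1 t2 :
  oeval B gens t1 = oeval B gens t2 ->
  oeval A y t1 = oeval A y t2.
Proof.
move=> t12; apply: omega_ext => j; rewrite !ocomp_eval.
exact: (@eval_gens_eq _ (valg j) _ id _ _ (@vsat _ _ _ j) (@inj_id _) t12).
Qed.

Section Provability.
Variables (Gamma : pseudo_set Sigma) (A : finType) (J : vindex Sigma A).
Hypothesis J_inj : injective (fun x : omega Sigma A => ocomp x J).

Lemma provable_ind' (R : omega Sigma A -> omega Sigma A -> Prop) :
  (forall x, R x x) -> (forall x y, gamma0 Gamma x y -> R x y) ->
  (forall x y z, R x y -> R y z -> R x z) ->
  (forall u v, (forall F, exists u' v', R u' v' /\ agree F u u' /\ agree F v v') -> R u v) ->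
  forall x y, provable Gamma x y -> R x y.
Proof.
move=> R_refl R_base R_trans R_clos; fix IH 3 => x y xy.
destruct xy as [x|x y xy|x y z xy yz|u v uv].
- exact: R_refl.
- exact: R_base.
- exact: R_trans (IH _ _ xy) (IH _ _ yz).
- apply: R_clos => F; destruct (uv F) as [u' [v' [u'v' agr]]].
  by exists u', v'; split; first exact: IH.
Qed.

Lemma provable_sym (x y : omega Sigma A) : provable Gamma x y -> provable Gamma y x.
Proof.
elim/provable_ind': x y / => [x|x y|x y z yx zy|u v uv].
- exact: pv_refl.
- move=> [B [u [v [Guv [phi [phi_cont [n [t [w [xE yE]]]]]]]]]].
  apply: pv_base; exists B, v, u; split; first by case: Guv; [right|left].
  by exists phi; split=> //; exists n, t, w.
- exact: pv_trans zy yx.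
- apply: pv_clos => F; have [u' [v' [vu' [agu agv]]]] := uv F.
  by exists v', u'.
Qed.

Lemma gamma0_translate (x y : omega Sigma A) m (t : term L (option 'I_m))
    (w : 'I_m -> omega Sigma A) :
  gamma0 Gamma x y -> gamma0 Gamma (oeval A (env x w) t) (oeval A (env y w) t).
Proof.
case=> B [u [v [Guv [phi [phi_cont [n [t0 [w0 [-> ->]]]]]]]]].
exists B, u, v; split=> //; exists phi; split=> //.
by exists (n + m), (subst (plug t0) t), (cat_params w0 w); rewrite -!eval_env_plug.
Qed.

Lemma provable_translate (x y : omega Sigma A) m (t : term L (option 'I_m))
    (w : 'I_m -> omega Sigma A) :
  provable Gamma x y -> provable Gamma (oeval A (env x w) t) (oeval A (env y w) t).
Proof.
move=> xy; move: m t w.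
elim/provable_ind': x y / xy => [x|x y xy|x y z xy yz|u v uv] m t w.
- exact: pv_refl.
- exact/pv_base/gamma0_translate.
- exact: pv_trans (xy m t w) (yz m t w).
- have [u' [v' [u'v' [/agree1/J_inj-> /agree1/J_inj->]]]] := uv [:: J].
  exact: u'v'.
Qed.

Lemma provable_op o (xs ys : 'I_(arity o) -> omega Sigma A) :
  (forall i, provable Gamma (xs i) (ys i)) ->
  provable Gamma (omega_op xs) (omega_op ys).
Proof.
apply: (compatible_of_translations (F := @omega_op L Sigma A o));
  [exact: pv_refl | exact: pv_trans | move=> i zs x y xy].
pose t := App (fun j : 'I_(arity o) => if j == i then Var L None else Var L (Some j)).
have tE p : oeval A (env p zs) t = omega_op (fun j => if j == i then p else zs j).
  by congr omega_op; apply: funext => j /=; case: eqP.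
by rewrite -!tE; apply: provable_translate.
Qed.

End Provability.

Section LocallyFinite.
Hypothesis Sigma_lf : locally_finite Sigma.

(* The retraction is the inverse of the isomorphism between the A-generated subalgebra of
   Omega_A V and its index J; compatibility along the induced maps valg J -> valg j shows that it
   inverts the J-th projection. *)
Lemma omega_retract (A : finType) :
  exists (J : vindex Sigma A) (r : 'I_(vn J) -> @gen_alg (Omega_alg Sigma A) A gens),
    forall x, sval (r (ocomp x J)) = x.
Proof.
pose g := @gen_of (Omega_alg Sigma A) A gens.
have sG : satisfies (@gen_alg (Omega_alg Sigma A) A gens) Sigma :=
  satisfies_inj_hom (@sval_gen_hom _ _ _) (@sval_inj _ _) (@Omega_sat A).
have finG : exists s : seq (@gen_alg (Omega_alg Sigma A) A gens), forall x, List.In x s.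
  apply: (@Sigma_lf _ sG _ (fun i : 'I_#|A| => g (enum_val i))) => x.
  have [t <-] := gen_alg_generated x.
  exists (subst (fun a => Var L (enum_rank a)) t); rewrite eval_subst /=.
  by f_equal; apply: funext => a; rewrite enum_rankK.
have [J [r [r_hom _ r_gen]]] := vindex_of_generated sG (@gen_alg_generated _ _ _) finG.
exists J, r => x; apply: omega_ext => j.
have h_hom : is_hom (A := valg J) (B := valg j) (fun i => ocomp (sval (r i)) j).
  by move=> o args /=; rewrite r_hom.
by apply: (ocompat x h_hom) => a /=; rewrite r_gen.
Qed.

Lemma omega_discrete (A : finType) :
  exists J : vindex Sigma A, injective (fun x : omega Sigma A => ocomp x J).
Proof.
have [J [r rK]] := omega_retract A.
by exists J => x y /= xy; rewrite -[x]rK -[y]rK xy.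
Qed.

Lemma omega_generated (A : finType) (x : omega Sigma A) : exists t, oeval A gens t = x.
Proof.
have [J [r rK]] := omega_retract A; have [t tx] := svalP (r (ocomp x J)).
by exists t; rewrite tx rK.
Qed.

Lemma omega_free (B A : finType) (y : B -> omega Sigma A) :
  exists phi : omega Sigma B -> omega Sigma A,
    is_hom (A := Omega_alg Sigma B) (B := Omega_alg Sigma A) phi /\
    forall b, phi (gens b) = y b.
Proof.
pose tm (x : omega Sigma B) := sval (cid (omega_generated x)).
have tmK x : oeval B gens (tm x) = x by rewrite /tm; case: cid.
exists (fun x => oeval A y (tm x)); split=> [o args|b].
  change (oeval A y (tm (omega_op args)) = oeval A y (App (fun i => tm (args i)))).
  apply: eval_gens_eq_omega; rewrite tmK /=.
  by congr omega_op; apply: funext => i; rewrite tmK.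
change (oeval A y (tm (gens b)) = oeval A y (Var L b)).
by apply: eval_gens_eq_omega; rewrite tmK.
Qed.

Lemma omega_continuous_to (A : finType) (T : Type) (f : omega Sigma A -> T) :
  continuous_to f.
Proof.
have [J J_inj] := omega_discrete A.
by move=> x; exists [:: J] => y /agree1/J_inj->.
Qed.

Lemma omega_continuous_om (B A : finType) (phi : omega Sigma B -> omega Sigma A) :
  continuous_om phi.
Proof.
have [J J_inj] := omega_discrete B.
by move=> x j; exists [:: J] => y /agree1/J_inj->.
Qed.

End LocallyFinite.
End Pseudovariety.
End UniversalAlgebra.

Theorem theorem5p2 (L : signature) (Sigma : identity L -> Prop) :
  locally_finite Sigma -> strong Sigma.
Proof.
move=> Sigma_lf Gamma A u v uv_holds.
have [J J_inj] := omega_discrete Sigma_lf A.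
have [Q [q [q_hom q_surj q_ker]]] :=
  quotient_finalgebra (A := Omega_alg Sigma A) J_inj (@pv_refl _ _ Gamma A)
    (@provable_sym _ _ Gamma A) (@pv_trans _ _ Gamma A) (provable_op J_inj).
apply/q_ker; apply: (uv_holds Q _ q q_hom (omega_continuous_to Sigma_lf q)); split.
  exact: (satisfies_hom_image q_hom q_surj (@Omega_sat _ Sigma A)).
move=> B u' v' Gu'v' f f_hom _.
pose y b := sval (cid (q_surj (f (gens Sigma b)))).
have [phi [phi_hom phi_gens]] := omega_free Sigma_lf y.
have gensE b : f (gens Sigma b) = q (phi (gens Sigma b)).
  by rewrite phi_gens /y; case: cid.
have fE := eq_hom_on_gens (A := Omega_alg Sigma B) (@omega_generated _ _ Sigma_lf B)
  f_hom (is_hom_comp phi_hom q_hom) gensE.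
rewrite !fE; apply/q_ker/pv_base; exists B, u', v'; split; first by left.
exists phi; split; first by split; [exact: phi_hom | exact: omega_continuous_om].
by exists 0, (Var L None), (fun _ => phi u').
Qed.
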